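(* Let $S$ be a set, $x\in\mathbb{R}$, and $f:\mathbb{R}\to S$ a scenario that is past-affine-invariant on $(-\infty,x)$. Then there is an affine-invariant scenario $g:\mathbb{R}\to S$ such that $f\upharpoonright(-\infty,x)=g\upharpoonright(-\infty,x)$.
   Context: A scenario is a function $f:\mathbb{R}\to S$ for an arbitrary set $S$. Let $T_2$ be the set of all functions $t:\mathbb{R}\to\mathbb{R}$ of the form $t(y)=ay+c$ with $a>0$, $c\in\mathbb{R}$. A scenario $f$ is affine-invariant if there is some $t\in T_2$, not the identity, with $f=f\circ t$. A scenario $f$ is past-affine-invariant on $(-\infty,x)$ if there is a non-identity $t\in T_2$ with $f\upharpoonright(-\infty,x)=(f\circ t)\upharpoonright(-\infty,x)$. *)

From Stdlib Require Import Reals.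
Open Scope R_scope.

(* An element of T_2: t(y) = a*y + c with a > 0, represented by (a, c). *)
Definition affine (a c : R) : R -> R := fun y => a * y + c.

Definition nonid_T2 (a c : R) : Prop :=
  0 < a /\ affine a c <> (fun y => y).

Definition affine_invariant {S : Type} (f : R -> S) : Prop :=
  exists a c : R, nonid_T2 a c /\ forall y : R, f y = f (affine a c y).

Definition past_affine_invariant {S : Type} (f : R -> S) (x : R) : Prop :=
  exists a c : R, nonid_T2 a c /\ forall y : R, y < x -> f y = f (affine a c y).

(* Replacing the non-identity map t by its inverse if necessary, we may assume
   t(x) <= x, so that t maps the half-line (-oo, x) into itself.  Every t-orbit
   that enters the half-line then meets f in a single value, and setting g to be
   that value along the whole orbit gives a t-invariant extension of f. *)

From Stdlib Require Import Reals Lra ClassicalEpsilon FunctionalExtensionality.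
Open Scope R_scope.

Section OrbitExtension.

Variables (X T : Type) (u : X -> X) (P : X -> Prop) (f : X -> T) (d : T).
Hypothesis P_stable : forall y, P y -> P (u y).
Hypothesis f_invariant : forall y, P y -> f (u y) = f y.

Lemma P_iter n y : P y -> P (Nat.iter n u y).
Proof. induction n as [|n IH]; intros Hy; simpl; auto. Qed.

Lemma f_iter n y : P y -> f (Nat.iter n u y) = f y.
Proof.
  induction n as [|n IH]; intros Hy; simpl; auto.
  rewrite f_invariant; auto using P_iter.
Qed.

Lemma f_iter_eq k m y :
  P (Nat.iter k u y) -> P (Nat.iter m u y) -> f (Nat.iter k u y) = f (Nat.iter m u y).
Proof.
  intros Hk Hm; destruct (Nat.le_ge_cases k m) as [Hkm | Hmk].
  - replace m with ((m - k) + k)%nat by (rewrite Nat.sub_add; auto).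
    rewrite Nat.iter_add; symmetry; apply f_iter; auto.
  - replace k with ((k - m) + m)%nat by (rewrite Nat.sub_add; auto).
    rewrite Nat.iter_add; apply f_iter; auto.
Qed.

(* On orbits that never enter P the value is the arbitrary constant d. *)
Definition orbit_extension (y : X) : T :=
  match excluded_middle_informative (exists n, P (Nat.iter n u y)) with
  | left H => f (Nat.iter (proj1_sig (constructive_indefinite_description _ H)) u y)
  | right _ => d
  end.

Lemma orbit_extension_eq y : P y -> orbit_extension y = f y.
Proof.
  intros Hy; unfold orbit_extension.
  destruct excluded_middle_informative as [H | H].
  - destruct constructive_indefinite_description as [n Hn]; simpl.
    apply f_iter; auto.
  - exfalso; apply H; exists 0%nat; auto.
Qed.

Lemma orbit_extension_invariant y : orbit_extension (u y) = orbit_extension y.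
Proof.
  assert (Hshift : forall n, Nat.iter n u (u y) = Nat.iter (S n) u y)
    by (intros n; apply Nat.iter_swap).
  unfold orbit_extension.
  destruct excluded_middle_informative as [H1 | H1];
    destruct excluded_middle_informative as [H2 | H2]; auto.
  - destruct constructive_indefinite_description as [m Hm];
      destruct constructive_indefinite_description as [k Hk]; simpl.
    rewrite Hshift in *; apply f_iter_eq; auto.
  - exfalso; apply H2; destruct H1 as [n Hn].
    exists (S n); rewrite <- Hshift; auto.
  - exfalso; apply H1; destruct H2 as [n Hn].
    exists n; rewrite Hshift; simpl; auto.
Qed.

End OrbitExtension.

Lemma affine_lt a c y z : 0 < a -> y < z -> affine a c y < affine a c z.
Proof. unfold affine; intros; nra. Qed.

Lemma affine_lt_reflect a c y z : 0 < a -> affine a c y < affine a c z -> y < z.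
Proof. unfold affine; intros; nra. Qed.

Lemma affine_invK a c y : 0 < a -> affine a c (affine (/ a) (- c / a) y) = y.
Proof. unfold affine; intros; field; lra. Qed.

Lemma nonid_T2_inv a c : nonid_T2 a c -> nonid_T2 (/ a) (- c / a).
Proof.
  intros [Ha Hid]; split; [apply Rinv_0_lt_compat; auto |].
  intros Hinv; apply Hid, functional_extensionality; intros y.
  rewrite <- (affine_invK a c y Ha) at 2.
  rewrite Hinv; reflexivity.
Qed.

Lemma past_affine_invariant_contracting {S : Type} (f : R -> S) (x : R) :
  past_affine_invariant f x ->
  exists a c, nonid_T2 a c /\ affine a c x <= x /\
              forall y, y < x -> f y = f (affine a c y).
Proof.
  intros [a [c [Hac Hf]]].
  destruct (Rle_or_lt (affine a c x) x) as [Hle | Hgt]; [exists a, c; auto |].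
  destruct Hac as [Ha Hid].
  exists (/ a), (- c / a); split; [apply nonid_T2_inv; split; auto |]; split.
  - apply Rnot_lt_le; intros Hlt.
    pose proof (affine_lt a c _ _ Ha Hlt) as H; rewrite affine_invK in H; lra.
  - intros y Hy.
    assert (Hlt : affine (/ a) (- c / a) y < x).
    { apply (affine_lt_reflect a c); auto; rewrite affine_invK; lra. }
    rewrite (Hf _ Hlt), affine_invK; auto.
Qed.

Theorem lemma2 (S : Type) (x : R) (f : R -> S) :
  past_affine_invariant f x ->
  exists g : R -> S, affine_invariant g /\ (forall y : R, y < x -> f y = g y).
Proof.
  intros Hpast.
  destruct (past_affine_invariant_contracting f x Hpast) as [a [c [Hac [Hx Hf]]]].
  assert (Hstable : forall y, y < x -> affine a c y < x).
  { intros y Hy; pose proof (affine_lt a c _ _ (proj1 Hac) Hy); lra. }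
  assert (Hinv : forall y, y < x -> f (affine a c y) = f y)
    by (intros y Hy; symmetry; auto).
  set (g := orbit_extension R S (affine a c) (fun y => y < x) f (f x)).
  exists g; split.
  - exists a, c; split; auto.
    intros y; symmetry; apply orbit_extension_invariant; auto.
  - intros y Hy; symmetry; apply orbit_extension_eq; auto.
Qed.
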